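(* Let $\mathfrak{g}$ be a finite-dimensional Lie algebra over a field $K$ of characteristic zero admitting a nondegenerate inner CPA-structure. Then $\mathfrak{g}$ is metabelian, i.e. $[[\mathfrak{g},\mathfrak{g}],[\mathfrak{g},\mathfrak{g}]]=0$.
   Context: A CPA-structure on $\mathfrak{g}$ is a bilinear product $x\cdot y$ satisfying, for all $x,y,z$: $x\cdot y=y\cdot x$; $[x,y]\cdot z=x\cdot(y\cdot z)-y\cdot(x\cdot z)$; $x\cdot[y,z]=[x\cdot y,z]+[y,x\cdot z]$. It is inner if $x\cdot y=[\phi(x),y]$ for some Lie algebra homomorphism $\phi:\mathfrak{g}\to\mathfrak{g}$, and nondegenerate if $\{x\mid x\cdot y=0\ \forall y\}=0$. *)

From HB Require Import structures.
From mathcomp Require Import all_boot all_order all_algebra.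
Set Implicit Arguments. Unset Strict Implicit. Unset Printing Implicit Defensive.
Import GRing.Theory.
Local Open Scope ring_scope.

Definition bilinear_op (K : fieldType) (V : vectType K) (m : V -> V -> V) : Prop :=
  (forall (a : K) (x y z : V), m (a *: x + y) z = a *: m x z + m y z) /\
  (forall (a : K) (x y z : V), m x (a *: y + z) = a *: m x y + m x z).

Definition is_lie_bracket (K : fieldType) (V : vectType K) (br : V -> V -> V) : Prop :=
  [/\ bilinear_op br,
      (forall x : V, br x x = 0) &
      (forall x y z : V, br x (br y z) + br y (br z x) + br z (br x y) = 0)].

Definition lie_hom (K : fieldType) (V : vectType K) (br : V -> V -> V) (phi : V -> V) : Prop :=
  (forall (a : K) (x y : V), phi (a *: x + y) = a *: phi x + phi y) /\
  (forall x y : V, phi (br x y) = br (phi x) (phi y)).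

Definition is_CPA (K : fieldType) (V : vectType K) (br dot : V -> V -> V) : Prop :=
  [/\ bilinear_op dot,
      (forall x y : V, dot x y = dot y x),
      (forall x y z : V, dot (br x y) z = dot x (dot y z) - dot y (dot x z)) &
      (forall x y z : V, dot x (br y z) = br (dot x y) z + br y (dot x z))].

Definition inner_CPA (K : fieldType) (V : vectType K) (br dot : V -> V -> V) : Prop :=
  exists phi : V -> V, lie_hom br phi /\ forall x y : V, dot x y = br (phi x) y.

Definition nondegenerate_CPA (K : fieldType) (V : vectType K) (dot : V -> V -> V) : Prop :=
  forall x : V, (forall y : V, dot x y = 0) -> x = 0.

(* [[g,g],[g,g]] = 0, i.e. all brackets of brackets vanish
   (equivalent by bilinearity, since [g,g] is spanned by brackets) *)
Definition metabelian (K : fieldType) (V : vectType K) (br : V -> V -> V) : Prop :=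
  forall a b c d : V, br (br a b) (br c d) = 0.

(** The inner CPA-structure is x.y = [P x, y] with P a Lie algebra endomorphism;
   commutativity of the product says [P x, y] = -[x, P y], and nondegeneracy
   makes P injective, hence bijective.  Combining both identities,
   P [x, y] = -[x, P^2 y], and applying this twice on either side of the
   Jacobi identity shows that P^2 acts trivially against derived elements:
   [[a, b], P^2 u] = [[a, b], u].  A second use of Jacobi then gives
   [[a, b], P [x, z]] = -[[a, b], [x, z]], and moving P from one derived
   factor to the other turns w := [[a, b], [c, d]] into -w, so 2 w = 0. *)

From HB Require Import structures.
From mathcomp Require Import all_boot all_order all_algebra.
Import GRing.Theory.
Local Open Scope ring_scope.
Set Implicit Arguments.

Section LinearMap.
Context {R : pzRingType} {U W : lmodType R} {f : U -> W}.
Hypothesis f_lin : forall a x y, f (a *: x + y) = a *: f x + f y.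

Lemma linD x y : f (x + y) = f x + f y.
Proof. by have := f_lin 1 x y; rewrite !scale1r. Qed.

Lemma lin0 : f 0 = 0.
Proof. by apply: (@addrI _ (f 0)); rewrite -linD !addr0. Qed.

Lemma linN x : f (- x) = - f x.
Proof. by apply/eqP; rewrite -subr_eq0 opprK -linD addNr lin0. Qed.

Lemma linB x y : f (x - y) = f x - f y.
Proof. by rewrite linD linN. Qed.

End LinearMap.

Lemma linear_inj_surj {K : fieldType} {V : vectType K} {f : V -> V} :
  (forall a x y, f (a *: x + y) = a *: f x + f y) -> injective f ->
  forall u, exists y, f y = u.
Proof.
move=> f_lin f_inj u.
pose g : {linear V -> V} := HB.pack f (GRing.isLinear.Build K V V *:%R f f_lin).
pose F := linfun g.
have kerF : lker F == 0%VS by apply/lker0P => x y; rewrite !lfunE; apply: f_inj.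
by exists (F^-1%VF u); have := lker0_lfunVK kerF u; rewrite lfunE.
Qed.

Section LieBracket.
Variables (K : fieldType) (V : vectType K) (br : V -> V -> V).
Hypothesis br_lie : is_lie_bracket br.

Lemma lie_linl y a x z : br (a *: x + z) y = a *: br x y + br z y.
Proof. by case: br_lie => [[brl _] _ _]; apply: brl. Qed.

Lemma lie_linr x a y z : br x (a *: y + z) = a *: br x y + br x z.
Proof. by case: br_lie => [[_ brr] _ _]; apply: brr. Qed.

Lemma lie_addl x y z : br (x + y) z = br x z + br y z.
Proof. exact: (linD (f := br^~ z) (lie_linl z)). Qed.

Lemma lie0l x : br 0 x = 0.
Proof. exact: (lin0 (f := br^~ x) (lie_linl x)). Qed.

Lemma lie_addr x y z : br x (y + z) = br x y + br x z.
Proof. exact: (linD (f := br x) (lie_linr x)). Qed.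

Lemma lie_oppr x y : br x (- y) = - br x y.
Proof. exact: (linN (f := br x) (lie_linr x)). Qed.

Lemma lie_anti x y : br x y = - br y x.
Proof.
case: br_lie => _ alt _.
have := alt (x + y); rewrite lie_addl !lie_addr !alt add0r addr0.
by move/eqP; rewrite addr_eq0 => /eqP.
Qed.

Lemma lie_jacobil a b t : br (br a b) t = br a (br b t) - br b (br a t).
Proof.
case: br_lie => _ _ jac.
have := jac a b t; rewrite (lie_anti t (br a b)) (lie_anti t a) lie_oppr.
by move/eqP; rewrite subr_eq0 => /eqP.
Qed.

Section SkewEndomorphism.
Variable P : V -> V.
Hypotheses (P_lin : forall a x y, P (a *: x + y) = a *: P x + P y)
           (P_hom : forall x y, P (br x y) = br (P x) (P y))
           (P_skew : forall x y, br (P x) y = - br x (P y))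
           (P_inj : injective P).

Lemma hom_lieE x y : P (br x y) = - br x (P (P y)).
Proof. by rewrite P_hom P_skew. Qed.

Lemma hom2_lieE x y : P (P (br x y)) = br x (P (P (P (P y)))).
Proof. by rewrite hom_lieE (linN P_lin) hom_lieE opprK. Qed.

Lemma derived_hom2_hom4 a b y :
  br (br a b) (P (P y)) = br (br a b) (P (P (P (P y)))).
Proof.
apply: oppr_inj; rewrite -hom_lieE lie_jacobil (linB P_lin).
rewrite (hom_lieE a (br b y)) (hom_lieE b (br a y)) !hom2_lieE.
by rewrite lie_jacobil opprB opprK addrC.
Qed.

Lemma derived_hom2 a b u : br (br a b) (P (P u)) = br (br a b) u.
Proof.
have [v <-] := linear_inj_surj P_lin P_inj u.
have [y <-] := linear_inj_surj P_lin P_inj v.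
exact/esym/derived_hom2_hom4.
Qed.

Lemma derived_hom_lie a b x z :
  br (br a b) (P (br x z)) = - br (br a b) (br x z).
Proof.
have := derived_hom2 x (br a b) z.
rewrite !(lie_jacobil x (br a b)) derived_hom2 => /addrI/oppr_inj E.
by rewrite hom_lieE lie_oppr E.
Qed.

Lemma skew_hom_metabelian : (2%:R : K) != 0 -> metabelian br.
Proof.
move=> two_neq0 a b c d.
set w := br (br a b) (br c d).
have w_opp : w = - w.
  have := P_skew (br a b) (br c d).
  rewrite derived_hom_lie opprK lie_anti derived_hom_lie opprK.
  by rewrite lie_anti => ->; rewrite -/w.
have : (2%:R : K) *: w = 0 by rewrite scaler_nat mulr2n {1}w_opp addNr.
by move/eqP; rewrite scaler_eq0 (negbTE two_neq0) => /eqP.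
Qed.

End SkewEndomorphism.
End LieBracket.

Theorem corollary2p15 (K : fieldType) (V : vectType K) (br : V -> V -> V) :
  [pchar K] =i pred0 ->
  is_lie_bracket br ->
  (exists dot : V -> V -> V,
      [/\ is_CPA br dot, inner_CPA br dot & nondegenerate_CPA dot]) ->
  metabelian br.
Proof.
move=> char0 br_lie [dot [[_ dotC _ _] [P [[P_lin P_hom] dotE]] dot_nd]].
have P_skew x y : br (P x) y = - br x (P y).
  by rewrite -dotE dotC dotE (lie_anti br_lie).
have P_inj : injective P.
  move=> x y Pxy; apply/eqP; rewrite -subr_eq0; apply/eqP; apply: dot_nd => z.
  by rewrite dotE (linB P_lin) Pxy subrr (lie0l br_lie).
apply: (skew_hom_metabelian br_lie P_lin P_hom P_skew P_inj).
by move/pcharf0P: char0 => ->.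
Qed.
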